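(* Let $(G,O)$ be an equipped group such that the elements of $O$ generate $G$ and $O$ consists of a single conjugacy class, and let $\widehat G$ be the associated $C$-group. Then $\widehat G$ is isomorphic to a semidirect product $[\widehat G,\widehat G]\rtimes\mathbb Z$.
   Context: An equipped group is a pair $(G,O)$, $G$ a group, $O\subset G$ a union of finitely many conjugacy classes, $1\notin O$. The associated $C$-group $\widehat G$ (the $C$-group equivalent to $(G,O)$) is the group with generators $y_g$ ($g\in O$) and relations $y_h^{-1}y_gy_h=y_{h^{-1}gh}$ for all $g,h\in O$. *)

From Stdlib Require Import ZArith.

Record group := Group {
  carrier :> Type;
  gmul : carrier -> carrier -> carrier;
  ginv : carrier -> carrier;
  gone : carrier;
  gmulA : forall x y z, gmul x (gmul y z) = gmul (gmul x y) z;
  gmul1l : forall x, gmul gone x = x;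
  gmul1r : forall x, gmul x gone = x;
  gmulVl : forall x, gmul (ginv x) x = gone;
  gmulVr : forall x, gmul x (ginv x) = gone
}.

Arguments gmul {g}.
Arguments ginv {g}.
Arguments gone {g}.

Definition gconj {G : group} (x h : G) : G := gmul (ginv h) (gmul x h).

Definition gcomm {G : group} (a b : G) : G :=
  gmul (ginv a) (gmul (ginv b) (gmul a b)).

Fixpoint npow {G : group} (x : G) (n : nat) : G :=
  match n with O => gone | S m => gmul x (npow x m) end.

Definition zpow {G : group} (x : G) (z : Z) : G :=
  if (0 <=? z)%Z then npow x (Z.to_nat z) else ginv (npow x (Z.to_nat (- z))).

Definition is_hom {G H : group} (f : G -> H) : Prop :=
  forall x y, f (gmul x y) = gmul (f x) (f y).

Definition is_iso {G H : group} (f : G -> H) : Prop :=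
  is_hom f /\ (forall x y, f x = f y -> x = y) /\ (forall z, exists x, f x = z).

Definition subgroup_closed {G : group} (P : G -> Prop) : Prop :=
  P gone /\ (forall x y, P x -> P y -> P (gmul x y)) /\ (forall x, P x -> P (ginv x)).

Definition generated {G : group} (S : G -> Prop) (x : G) : Prop :=
  forall P : G -> Prop, subgroup_closed P -> (forall s, S s -> P s) -> P x.

Definition generates {G : group} (S : G -> Prop) : Prop :=
  forall x : G, generated S x.

Definition single_conj_class {G : group} (O : G -> Prop) : Prop :=
  exists g : G, g <> gone /\ forall x, O x <-> exists h : G, x = gconj g h.

Definition equipped_single {G : group} (O : G -> Prop) : Prop :=
  single_conj_class O.

Definition Crel {G H : group} (O : G -> Prop) (y : G -> H) : Prop :=
  forall g h, O g -> O h -> gconj (y g) (y h) = y (gconj g h).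

(* (H, y) is the C-group equivalent to (G,O): the group presented by
   generators y_g (g in O) and the relations above, characterised by its
   universal property (unique up to unique isomorphism).  Only the values
   of y on O are relevant. *)
Definition is_Cgroup {G : group} (O : G -> Prop) (H : group) (y : G -> H) : Prop :=
  Crel O y /\
  (forall (K : group) (z : G -> K), Crel O z ->
     exists f : H -> K, is_hom f /\ forall g, O g -> f (y g) = z g) /\
  (forall (K : group) (f1 f2 : H -> K), is_hom f1 -> is_hom f2 ->
     (forall g, O g -> f1 (y g) = f2 (y g)) -> forall x, f1 x = f2 x).

Definition comm_subgroup (H : group) (x : H) : Prop :=
  generated (fun c => exists a b : H, c = gcomm a b) x.

Definition normal_sub {H : group} (N : H -> Prop) : Prop :=
  subgroup_closed N /\ forall x h, N x -> N (gconj x h).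

Definition infinite_cyclic_sub {H : group} (Q : H -> Prop) : Prop :=
  exists t : H, (forall x, Q x <-> exists n : Z, x = zpow t n) /\
                (forall n : Z, zpow t n = gone -> n = 0%Z).

Definition semidirect {H : group} (N Q : H -> Prop) : Prop :=
  normal_sub N /\ subgroup_closed Q /\
  (forall x, N x -> Q x -> x = gone) /\
  (forall x, exists n q, N n /\ Q q /\ x = gmul n q).

(* The universal property of the C-group gives a homomorphism [deg : H -> Z]
   sending every generator [y_g] to 1, so [deg] vanishes on [[H,H]].  Since [O]
   is one conjugacy class and generates [G], every [y_g] is a conjugate of a
   fixed [t = y_{g0}], hence congruent to [t] modulo [[H,H]]; so [H/[H,H]] is
   generated by the image of [t] and every [x] is congruent to [t^(deg x)].
   Then [[H,H]] is the kernel of [deg], and [<t>], on which [deg] is injective,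
   is a complement to it. *)

From Stdlib Require Import ZArith Lia.
From Stdlib Require Import IndefiniteDescription ProofIrrelevance
  FunctionalExtensionality PropExtensionality.

Section GroupFacts.
Context {G : group}.
Implicit Types a b x h k : G.

Lemma gmul_cancel_l a x y : gmul a x = gmul a y -> x = y.
Proof.
  intro E. rewrite <- (gmul1l _ x), <- (gmul1l _ y), <- (gmulVl _ a), <- !gmulA, E.
  reflexivity.
Qed.

Lemma ginv_unique a b : gmul a b = gone -> ginv a = b.
Proof. intro E. apply (gmul_cancel_l a). rewrite gmulVr, E. reflexivity. Qed.

Lemma ginvK a : ginv (ginv a) = a.
Proof. apply ginv_unique, gmulVl. Qed.

Lemma ginv1 : ginv (gone : G) = gone.
Proof. apply ginv_unique, gmul1l. Qed.

Lemma gmulKV a b : gmul (ginv a) (gmul a b) = b.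
Proof. rewrite gmulA, gmulVl, gmul1l. reflexivity. Qed.

Lemma gmulVK a b : gmul a (gmul (ginv a) b) = b.
Proof. rewrite gmulA, gmulVr, gmul1l. reflexivity. Qed.

Lemma ginvM a b : ginv (gmul a b) = gmul (ginv b) (ginv a).
Proof. apply ginv_unique. rewrite <- gmulA, gmulVK, gmulVr. reflexivity. Qed.

Lemma gconj1 x : gconj x gone = x.
Proof. unfold gconj. rewrite ginv1, gmul1l, gmul1r. reflexivity. Qed.

Lemma gconjM x h k : gconj x (gmul h k) = gconj (gconj x h) k.
Proof. unfold gconj. rewrite ginvM, !gmulA. reflexivity. Qed.

Lemma gconjVK x h : gconj (gconj x (ginv h)) h = x.
Proof. rewrite <- gconjM, gmulVl, gconj1. reflexivity. Qed.

Lemma gconj_gcomm x h : gconj x h = gmul x (gcomm x h).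
Proof. unfold gconj, gcomm. rewrite gmulVK. reflexivity. Qed.

Lemma gcomm_commute a b : gmul a b = gmul b a -> gcomm a b = gone.
Proof. intro E. unfold gcomm. rewrite E, gmulKV, gmulVl. reflexivity. Qed.

Lemma npowSr x n : npow x (S n) = gmul (npow x n) x.
Proof.
  induction n as [|n IH]; simpl.
  - rewrite gmul1r, gmul1l. reflexivity.
  - simpl in IH. rewrite IH, gmulA, IH. reflexivity.
Qed.

End GroupFacts.

Section IntegerPowers.
Context {G : group} (t : G).

Lemma zpow_nonneg n : (0 <= n)%Z -> zpow t n = npow t (Z.to_nat n).
Proof. intro Hn. unfold zpow. destruct (Z.leb_spec 0 n); [reflexivity | lia]. Qed.

Lemma zpow_nonpos n : (n <= 0)%Z -> zpow t n = ginv (npow t (Z.to_nat (- n))).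
Proof.
  intro Hn. unfold zpow. destruct (Z.leb_spec 0 n).
  - assert (n = 0%Z) by lia. subst. simpl. rewrite ginv1. reflexivity.
  - reflexivity.
Qed.

Lemma zpowS n : zpow t (Z.succ n) = gmul (zpow t n) t.
Proof.
  destruct (Z_lt_le_dec n 0) as [Hn | Hn].
  - rewrite (zpow_nonpos n), (zpow_nonpos (Z.succ n)) by lia.
    replace (Z.to_nat (- n)) with (S (Z.to_nat (- Z.succ n))) by lia.
    simpl. rewrite ginvM, <- gmulA, gmulVl, gmul1r. reflexivity.
  - rewrite !zpow_nonneg, Z2Nat.inj_succ by lia. apply npowSr.
Qed.

Lemma zpowP n : zpow t (Z.pred n) = gmul (zpow t n) (ginv t).
Proof.
  rewrite <- (Z.succ_pred n) at 2. rewrite zpowS, <- gmulA, gmulVr, gmul1r.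
  reflexivity.
Qed.

Lemma zpow1 : zpow t 1 = t.
Proof. unfold zpow; simpl. apply gmul1r. Qed.

Lemma zpowD m p : zpow t (m + p) = gmul (zpow t m) (zpow t p).
Proof.
  induction p using Z.peano_ind.
  - rewrite Z.add_0_r, gmul1r. reflexivity.
  - rewrite Z.add_succ_r, !zpowS, IHp, gmulA. reflexivity.
  - rewrite Z.add_pred_r, !zpowP, IHp, gmulA. reflexivity.
Qed.

Lemma zpowN n : zpow t (- n) = ginv (zpow t n).
Proof. symmetry. apply ginv_unique. rewrite <- zpowD, Z.add_opp_diag_r. reflexivity. Qed.

End IntegerPowers.

Definition Zadd_group : group :=
  Group Z Z.add Z.opp 0%Z Z.add_assoc Z.add_0_l Z.add_0_r
    Z.add_opp_diag_l Z.add_opp_diag_r.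

Lemma zpow_Zadd_one n : zpow (G := Zadd_group) 1%Z n = n.
Proof.
  induction n using Z.peano_ind.
  - reflexivity.
  - rewrite zpowS, IHn. simpl. lia.
  - rewrite zpowP, IHn. simpl. lia.
Qed.

Section Homomorphisms.
Context {G K : group} (f : G -> K) (hf : is_hom f).

Lemma hom1 : f gone = gone.
Proof. apply (gmul_cancel_l (f gone)). rewrite <- hf, !gmul1r. reflexivity. Qed.

Lemma homV x : f (ginv x) = ginv (f x).
Proof. symmetry. apply ginv_unique. rewrite <- hf, gmulVr. apply hom1. Qed.

Lemma hom_gcomm a b : f (gcomm a b) = gcomm (f a) (f b).
Proof. unfold gcomm. rewrite !hf, !homV. reflexivity. Qed.

Lemma hom_zpow x n : f (zpow x n) = zpow (f x) n.
Proof.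
  induction n using Z.peano_ind.
  - apply hom1.
  - rewrite !zpowS, hf, IHn. reflexivity.
  - rewrite !zpowP, hf, IHn, homV. reflexivity.
Qed.

End Homomorphisms.

Section Generated.
Context {G : group} (S : G -> Prop).

Lemma generated_closed : subgroup_closed (generated S).
Proof.
  split; [| split].
  - intros P [h1 _] _. exact h1.
  - intros x y hx hy P hP hS. apply hP; [apply hx | apply hy]; assumption.
  - intros x hx P hP hS. apply hP. apply hx; assumption.
Qed.

Lemma generated_incl s : S s -> generated S s.
Proof. intros hs P _ hS. apply hS, hs. Qed.

End Generated.

Lemma comm_subgroup_normal (H : group) : normal_sub (comm_subgroup H).
Proof.
  split; [apply generated_closed |]. intros x h hx. rewrite gconj_gcomm.
  apply generated_closed; [exact hx |]. apply generated_incl. exists x, h. reflexivity.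
Qed.

Lemma hom_abelian_comm_subgroup {H K : group} (f : H -> K) :
  is_hom f -> (forall u v : K, gmul u v = gmul v u) ->
  forall x, comm_subgroup H x -> f x = gone.
Proof.
  intros hf hK x hx. apply (hx (fun x => f x = gone)).
  - split; [| split].
    + apply (hom1 f hf).
    + intros a b ha hb. rewrite hf, ha, hb. apply gmul1l.
    + intros a ha. rewrite (homV f hf), ha. apply ginv1.
  - intros c [a [b ->]]. rewrite (hom_gcomm f hf). apply gcomm_commute, hK.
Qed.

Section Quotient.
Context {H : group} (N : H -> Prop) (hN : normal_sub N).

Definition congr_mod (a b : H) : Prop := N (gmul a (ginv b)).

Let N1 : N gone := proj1 (proj1 hN).
Let NM : forall x y, N x -> N y -> N (gmul x y) := proj1 (proj2 (proj1 hN)).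
Let NV : forall x, N x -> N (ginv x) := proj2 (proj2 (proj1 hN)).
Let Nconj : forall x h, N x -> N (gconj x h) := proj2 hN.

Lemma congr_mod_refl a : congr_mod a a.
Proof. unfold congr_mod. rewrite gmulVr. exact N1. Qed.

Lemma congr_mod_sym a b : congr_mod a b -> congr_mod b a.
Proof. unfold congr_mod. intro h. apply NV in h. rewrite ginvM, ginvK in h. exact h. Qed.

Lemma congr_mod_trans a b c : congr_mod a b -> congr_mod b c -> congr_mod a c.
Proof.
  unfold congr_mod. intros h1 h2. pose proof (NM _ _ h1 h2) as h.
  rewrite <- gmulA, gmulKV in h. exact h.
Qed.

(* [a b (a' b')^-1] is the conjugate of [b b'^-1] by [a^-1], times [a a'^-1]. *)
Lemma congr_mod_mul a a' b b' :
  congr_mod a a' -> congr_mod b b' -> congr_mod (gmul a b) (gmul a' b').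
Proof.
  unfold congr_mod. intros h1 h2.
  pose proof (NM _ _ (Nconj _ (ginv a) h2) h1) as h.
  unfold gconj in h. rewrite ginvK, <- !gmulA, gmulKV, !gmulA in h.
  rewrite ginvM, !gmulA. exact h.
Qed.

Lemma congr_mod_inv a b : congr_mod a b -> congr_mod (ginv a) (ginv b).
Proof.
  intro h1. apply congr_mod_sym in h1. unfold congr_mod in *.
  pose proof (Nconj _ a h1) as h. unfold gconj in h.
  rewrite ginvK. rewrite <- !gmulA, gmulVl, gmul1r in h. exact h.
Qed.

Lemma congr_mod_mulN a c : N c -> congr_mod (gmul a c) a.
Proof.
  intro hc. rewrite <- (gmul1r _ a) at 2. apply congr_mod_mul; [apply congr_mod_refl |].
  unfold congr_mod. rewrite ginv1, gmul1r. exact hc.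
Qed.

(* The quotient [H/N] is modelled as the type of cosets, viewed as predicates;
   its operations act on chosen representatives. *)
Definition coset (a : H) : H -> Prop := congr_mod a.
Definition quotient_carrier := {S : H -> Prop | exists a, S = coset a}.
Definition coset_proj (a : H) : quotient_carrier :=
  exist _ (coset a) (ex_intro _ a eq_refl).

Lemma quotient_eq (S T : quotient_carrier) : proj1_sig S = proj1_sig T -> S = T.
Proof.
  destruct S as [S p], T as [T q]; simpl. intros ->. f_equal. apply proof_irrelevance.
Qed.

Lemma coset_proj_eq a b : coset_proj a = coset_proj b <-> congr_mod a b.
Proof.
  split.
  - intro E. apply (f_equal (@proj1_sig _ _)) in E. simpl in E.
    change (coset a b). rewrite E. apply congr_mod_refl.
  - intro h. apply quotient_eq. simpl. extensionality z.
    apply propositional_extensionality. unfold coset. split; intro h'.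
    + apply (congr_mod_trans _ a); [apply congr_mod_sym |]; assumption.
    + apply (congr_mod_trans _ b); assumption.
Qed.

Lemma coset_proj_surj (S : quotient_carrier) : exists a, S = coset_proj a.
Proof. destruct S as [S [a E]]. exists a. apply quotient_eq. exact E. Qed.

Definition coset_repr (S : quotient_carrier) : H :=
  proj1_sig (constructive_indefinite_description _ (coset_proj_surj S)).

Lemma coset_reprK S : S = coset_proj (coset_repr S).
Proof. unfold coset_repr. destruct (constructive_indefinite_description _ _). exact e. Qed.

Lemma coset_repr_proj a : congr_mod (coset_repr (coset_proj a)) a.
Proof. apply coset_proj_eq. symmetry. apply coset_reprK. Qed.

Definition qmul (S T : quotient_carrier) : quotient_carrier :=
  coset_proj (gmul (coset_repr S) (coset_repr T)).
Definition qinv (S : quotient_carrier) : quotient_carrier :=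
  coset_proj (ginv (coset_repr S)).
Definition qone : quotient_carrier := coset_proj gone.

Lemma qmul_proj a b : qmul (coset_proj a) (coset_proj b) = coset_proj (gmul a b).
Proof. apply coset_proj_eq, congr_mod_mul; apply coset_repr_proj. Qed.

Lemma qinv_proj a : qinv (coset_proj a) = coset_proj (ginv a).
Proof. apply coset_proj_eq, congr_mod_inv, coset_repr_proj. Qed.

Lemma qmulA x y z : qmul x (qmul y z) = qmul (qmul x y) z.
Proof.
  destruct (coset_proj_surj x) as [a ->], (coset_proj_surj y) as [b ->],
    (coset_proj_surj z) as [c ->].
  rewrite !qmul_proj, gmulA. reflexivity.
Qed.

Lemma qmul1l x : qmul qone x = x.
Proof. destruct (coset_proj_surj x) as [a ->]. unfold qone. rewrite qmul_proj, gmul1l. reflexivity. Qed.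

Lemma qmul1r x : qmul x qone = x.
Proof. destruct (coset_proj_surj x) as [a ->]. unfold qone. rewrite qmul_proj, gmul1r. reflexivity. Qed.

Lemma qmulVl x : qmul (qinv x) x = qone.
Proof. destruct (coset_proj_surj x) as [a ->]. rewrite qinv_proj, qmul_proj, gmulVl. reflexivity. Qed.

Lemma qmulVr x : qmul x (qinv x) = qone.
Proof. destruct (coset_proj_surj x) as [a ->]. rewrite qinv_proj, qmul_proj, gmulVr. reflexivity. Qed.

Definition quotient_group : group :=
  Group quotient_carrier qmul qinv qone qmulA qmul1l qmul1r qmulVl qmulVr.

Lemma coset_proj_hom : is_hom (G := H) (H := quotient_group) coset_proj.
Proof. intros a b. symmetry. apply qmul_proj. Qed.

End Quotient.

Lemma semidirect_of_degree {H : group} (N : H -> Prop) (deg : H -> Zadd_group) (t : H) :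
  normal_sub N -> is_hom deg -> deg t = 1%Z ->
  (forall x, N x -> deg x = 0%Z) ->
  (forall x, congr_mod N x (zpow t (deg x))) ->
  exists Q : H -> Prop, infinite_cyclic_sub Q /\ semidirect N Q.
Proof.
  intros hN hdeg ht hker hsec.
  assert (hdeg_zpow : forall n, deg (zpow t n) = n).
  { intro n. rewrite (hom_zpow deg hdeg), ht. apply zpow_Zadd_one. }
  exists (fun x => exists n, x = zpow t n). split; [| split; [exact hN | split; [| split]]].
  - exists t. split; [tauto |]. intros n E. apply (f_equal deg) in E.
    rewrite hdeg_zpow, (hom1 deg hdeg) in E. exact E.
  - split; [| split].
    + exists 0%Z. reflexivity.
    + intros a b [m ->] [p ->]. exists (m + p)%Z. symmetry. apply zpowD.
    + intros a [m ->]. exists (- m)%Z. symmetry. apply zpowN.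
  - intros x hx [n ->]. apply hker in hx. rewrite hdeg_zpow in hx. subst. reflexivity.
  - intro x. exists (gmul x (ginv (zpow t (deg x)))), (zpow t (deg x)).
    split; [apply hsec |]. split; [eexists; reflexivity |].
    rewrite <- gmulA, gmulVl, gmul1r. reflexivity.
Qed.

Section CGroup.
Context {G : group} (O : G -> Prop) (g0 : G)
  (hO : forall x, O x <-> exists h : G, x = gconj g0 h) (hgen : generates O)
  {H : group} (y : G -> H) (hC : is_Cgroup O H y).

Let N := comm_subgroup H.

Lemma Cgroup_degree :
  exists deg : H -> Zadd_group, is_hom deg /\ forall g, O g -> deg (y g) = 1%Z.
Proof.
  destruct hC as [_ [huniv _]]. apply (huniv Zadd_group (fun _ => 1%Z)).
  intros g h _ _. unfold gconj. simpl. lia.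
Qed.

Lemma class_conj_closed g h : O g -> O (gconj g h).
Proof.
  intro hg. apply hO in hg. destruct hg as [k ->]. apply hO.
  exists (gmul k h). rewrite gconjM. reflexivity.
Qed.

(* Conjugating by [h] fixes every [y_g] modulo [N]: true for [h] in [O] by the
   C-group relations, hence for all [h] since [O] generates [G]. *)
Lemma Cgroup_conj_congr h g :
  O g -> congr_mod N (y (gconj g h)) (y g).
Proof.
  destruct hC as [hrel _]. revert g. apply (hgen h).
  - split; [| split].
    + intros g _. rewrite gconj1. apply congr_mod_refl, comm_subgroup_normal.
    + intros a b ha hb g hg. rewrite gconjM.
      apply (congr_mod_trans _ (comm_subgroup_normal H) _ (y (gconj g a)));
        [apply hb, class_conj_closed |]; auto.
    + intros a ha g hg. apply congr_mod_sym; [apply comm_subgroup_normal |].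
      rewrite <- (gconjVK g a) at 1. apply ha, class_conj_closed, hg.
  - intros h0 hh g hg. rewrite <- hrel by assumption. rewrite gconj_gcomm.
    apply congr_mod_mulN; [apply comm_subgroup_normal |].
    apply generated_incl. eexists; eexists; reflexivity.
Qed.

Lemma Cgroup_congr_power (deg : H -> Zadd_group) :
  is_hom deg -> (forall g, O g -> deg (y g) = 1%Z) ->
  forall x, congr_mod N x (zpow (y g0) (deg x)).
Proof.
  destruct hC as [_ [_ huniq]]. intros hdeg hdeg1 x.
  pose proof (comm_subgroup_normal H) as hN.
  apply (coset_proj_eq N hN).
  apply (huniq (quotient_group N hN) (coset_proj N)
               (fun x => coset_proj N (zpow (y g0) (deg x)))).
  - apply coset_proj_hom.
  - intros a b. rewrite hdeg. simpl. rewrite zpowD. symmetry. apply qmul_proj, hN.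
  - intros g hg. rewrite hdeg1, zpow1 by exact hg. apply coset_proj_eq; [exact hN |].
    apply hO in hg. destruct hg as [h ->]. apply Cgroup_conj_congr.
    apply hO. exists gone. rewrite gconj1. reflexivity.
Qed.

End CGroup.

Theorem proposition2p15 (G : group) (O : G -> Prop)
  (hO : equipped_single O) (hgen : generates O)
  (H : group) (y : G -> H) (hC : is_Cgroup O H y) :
  exists Q : H -> Prop, infinite_cyclic_sub Q /\ semidirect (comm_subgroup H) Q.
Proof.
  destruct hO as [g0 [_ hOc]].
  destruct (Cgroup_degree O y hC) as [deg [hdeg hdeg1]].
  assert (hO0 : O g0) by (apply hOc; exists gone; rewrite gconj1; reflexivity).
  apply (semidirect_of_degree _ deg (y g0)).
  - apply comm_subgroup_normal.
  - exact hdeg.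
  - exact (hdeg1 g0 hO0).
  - apply (hom_abelian_comm_subgroup deg hdeg). intros u v. apply Z.add_comm.
  - exact (Cgroup_congr_power O g0 hOc hgen y hC deg hdeg hdeg1).
Qed.
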